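(* Let $L\ge3$, assume $\min\{d_1,\dots,d_{L-1}\}\ge d_{\min}$, and suppose that for some $i\in[r_Y]$, $$\lambda=y_i^{2(L-1)}\Big(\big(\tfrac{L-2}L\big)^{\frac L{2(L-1)}}+\big(\tfrac L{L-2}\big)^{\frac{L-2}{2(L-1)}}\Big)^{-2(L-1)}.$$ Then there exists $\bm\sigma^*\in\mathcal A$ such that there do not exist constants $\epsilon,\kappa>0$ with $\mathrm{dist}(\bm W,\widehat{\mathcal W}_{\bm\sigma^*})\le\kappa\|\nabla G(\bm W)\|_F$ for all $\bm W$ satisfying $\mathrm{dist}(\bm W,\widehat{\mathcal W}_{\bm\sigma^*})\le\epsilon$.
   Context: Setting: $d_0,\dots,d_L$ positive integers, $d_{\min}=\min\{d_0,d_L\}$, $\lambda>0$, $\bm Y\in\mathbb R^{d_L\times d_0}$ diagonal with entries $y_1\ge\dots\ge y_{d_{\min}}\ge0$, $r_Y$ the number of positive $y_i$; $G(\bm W)=\|\bm W_L\cdots\bm W_1-\sqrt\lambda\bm Y\|_F^2+\lambda\sum_l\|\bm W_l\|_F^2$, $\bm W_l\in\mathbb R^{d_l\times d_{l-1}}$. $\mathcal A=\{\bm a\in\mathbb R^{d_{\min}}:a_i^{2L-1}-\sqrt\lambda y_ia_i^{L-1}+\lambda a_i=0,a_i\ge0\ \forall i\}$. For $\bm\sigma^*\in\mathcal A$, $\widehat{\mathcal W}_{\bm\sigma^*}:=\mathcal W_{\mathrm{sort}(\bm\sigma^* )}$, where $\mathrm{sort}$ arranges entries in nonincreasing order and, for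 nonincreasing $\bm\sigma=\bm\Pi\bm a$ with $\bm a\in\mathcal A$ and $\bm\Pi$ a permutation matrix, $\mathcal W_{\bm\sigma}$ is the set of tuples $\bm W_1=\bm Q_2\bm\Sigma_1\mathrm{BlkD}(\bm\Pi,\bm I)\mathrm{BlkD}(\bm O_1,\dots,\bm O_{p_Y+1})$, $\bm W_l=\bm Q_{l+1}\bm\Sigma_l\bm Q_l^T$ ($2\le l\le L-1$), $\bm W_L=\mathrm{BlkD}(\bm O_1^T,\dots,\bm O_{p_Y}^T,\widehat{\bm O}_{p_Y+1}^T)\mathrm{BlkD}(\bm\Pi^T,\bm I)\bm\Sigma_L\bm Q_L^T$, with $\bm\Sigma_l\in\mathbb R^{d_l\times d_{l-1}}$ having top-left block $\mathrm{diag}(\bm\sigma)$, zeros elsewhere, and $\bm Q_l\in\mathcal O^{d_{l-1}}$, $\bm O_k\in\mathcal O^{h_k}$ ($h_k$ the multiplicities of the $p_Y$ distinct positive $y$-values), $\bm O_{p_Y+1}\in\mathcal O^{d_0-r_Y}$, $\widehat{\bm O}_{p_Y+1}\in\mathcal O^{d_L-r_Y}$ arbitrary orthogonal. Distances and gradient norms are Frobenius norms on tuples. *)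

From HB Require Import structures.
From mathcomp Require Import all_boot all_order all_algebra all_fingroup.
From mathcomp Require Import all_classical all_reals all_analysis.
Set Implicit Arguments. Unset Strict Implicit. Unset Printing Implicit Defensive.
Import Order.TTheory GRing.Theory Num.Theory.
Local Open Scope ring_scope.
Local Open Scope classical_set_scope.

Section Defs.
Variable R : realType.
(* dimensions d_0, ..., d_L (only n <= L is relevant) *)
Variable d : nat -> nat.
Variable L : nat.

(* A tuple (W_1, ..., W_L): paper's W_{n+1} is [W n] : 'M_(d_{n+1}, d_n),
   only indices n < L are relevant (all notions below ignore n >= L). *)
Definition wtuple := forall n : nat, 'M[R]_(d n.+1, d n).

Definition dmin : nat := minn (d 0) (d L).

Definition frob2 m n (M : 'M[R]_(m, n)) : R := \sum_i \sum_j M i j ^+ 2.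

Definition wnorm (W : wtuple) : R := Num.sqrt (\sum_(n < L) frob2 (W n)).
Definition wsub (W V : wtuple) : wtuple := fun n => W n - V n.
Definition wadd (W V : wtuple) : wtuple := fun n => W n + V n.
Definition winner (W V : wtuple) : R :=
  \sum_(n < L) \sum_i \sum_j W n i j * V n i j.

(* wprod W n = W_n ... W_1 (paper indexing); wprod W 0 = identity *)
Fixpoint wprod (W : wtuple) (n : nat) : 'M[R]_(d n, d 0) :=
  match n return 'M[R]_(d n, d 0) with
  | 0 => 1%:M
  | k.+1 => W k *m wprod W k
  end.

(* Y : d_L x d_0 diagonal with entries y_1 >= ... >= y_dmin (here y 0, y 1, ...) *)
Definition Ymat (y : nat -> R) : 'M[R]_(d L, d 0) :=
  \matrix_(i, j) if (i == j :> nat) then y i else 0.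

Definition Gobj (lam : R) (y : nat -> R) (W : wtuple) : R :=
  frob2 (wprod W L - Num.sqrt lam *: Ymat y) + lam * \sum_(n < L) frob2 (W n).

Definition is_gradient (f : wtuple -> R) (W g : wtuple) : Prop :=
  forall e : R, 0 < e -> exists2 delta : R, 0 < delta &
    forall H : wtuple, wnorm H < delta ->
      `| f (wadd W H) - f W - winner g H | <= e * wnorm H.

Definition rY (y : nat -> R) : nat := count (fun i => 0 < y i) (iota 0 dmin).

Definition inA (lam : R) (y : nat -> R) (a : nat -> R) : Prop :=
  forall i, (i < dmin)%N ->
    a i ^+ (2 * L - 1) - Num.sqrt lam * y i * a i ^+ (L - 1) + lam * a i = 0
    /\ 0 <= a i.

Definition sortdesc (a : nat -> R) : nat -> R :=
  fun i => nth 0 (path.sort (fun (x z : R) => z <= x) [seq a k | k <- iota 0 dmin]) i.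

Definition plift (s : 'S_dmin) (i : nat) : nat :=
  match (insub i : option 'I_dmin) with Some o => nat_of_ord (s o) | None => i end.

(* BlkD(Pi, I) of size n, Pi the permutation matrix of s *)
Definition Pblk {n} (s : 'S_dmin) : 'M[R]_n := \matrix_(i, j) (plift s i == j)%:R.

Definition Sig (sig : nat -> R) m n : 'M[R]_(m, n) :=
  \matrix_(i, j) if (i == j :> nat) && (i < dmin)%N then sig i else 0.

Definition orthogonal n (M : 'M[R]_n) : Prop := M *m M^T = 1%:M.

(* M is block diagonal w.r.t. the blocks of indices of equal positive y-values
   (of sizes h_1, ..., h_{p_Y}) and the remaining block {r_Y, ..., n-1} *)
Definition blockdiag (y : nat -> R) n (M : 'M[R]_n) : Prop :=
  forall i j : 'I_n, M i j != 0 ->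
    ((i < rY y)%N = (j < rY y)%N) /\ ((i < rY y)%N -> y i = y j).

(* W in W_sigma, for sigma = Pi a with a in A and Pi a permutation matrix *)
Definition inWsig (lam : R) (y : nat -> R) (sig : nat -> R) (W : wtuple) : Prop :=
  exists (a : nat -> R) (s : 'S_dmin),
    inA lam y a /\ (forall i, (i < dmin)%N -> sig i = a (plift s i)) /\
    exists (O0 : 'M[R]_(d 0)) (OL : 'M[R]_(d L)),
      (* O0 = BlkD(O_1,...,O_{p_Y}, O_{p_Y+1}),  OL = BlkD(O_1^T,...,O_{p_Y}^T, hat O_{p_Y+1}^T) *)
      orthogonal O0 /\ blockdiag y O0 /\ orthogonal OL /\ blockdiag y OL /\
      (forall (i j : 'I_(d L)) (i' j' : 'I_(d 0)), i = i' :> nat -> j = j' :> nat ->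
         (i < rY y)%N -> (j < rY y)%N -> OL i j = O0 j' i') /\
      (* U 0 = (BlkD(Pi,I) O0)^T, U n = Q_{n+1} (1 <= n <= L-1), U L = OL BlkD(Pi^T,I) *)
      exists U : forall n, 'M[R]_(d n),
        U 0 = (Pblk s *m O0)^T /\ U L = OL *m (Pblk s)^T /\
        (forall n, (0 < n < L)%N -> orthogonal (U n)) /\
        (forall n, (n < L)%N -> W n = U n.+1 *m Sig sig _ _ *m (U n)^T).

Definition What (lam : R) (y : nat -> R) (sstar : nat -> R) : set wtuple :=
  [set W | inWsig lam y (sortdesc sstar) W].

Definition wdist (W : wtuple) (S : set wtuple) : R :=
  inf [set wnorm (wsub W V) | V in S].

Definition lam_crit (yi : R) : R :=
  yi ^+ (2 * (L - 1)) *
  ((((L - 2)%:R / L%:R) `^ (L%:R / (2 * (L - 1))%:R)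
    + (L%:R / (L - 2)%:R) `^ ((L - 2)%:R / (2 * (L - 1))%:R)) ^- (2 * (L - 1))).

End Defs.

(* At the critical value of lambda the scalar polynomial
   p(x) = x^(2L-1) - sqrt(lambda) y_i x^(L-1) + lambda x, whose nonnegative roots are the
   admissible singular values, has a positive double root a; take sigma* = a e_i.  Along the
   curve of balanced rank-one tuples W(a + t), each layer carrying the single entry a + t, the
   gradient of G is 2 p(a + t) W(1), of norm O(t^2) since a is a double root.  Every point of
   the critical set has inner layers of Frobenius norm a, so W(a + t) stays at distance at
   least t from it.  An error bound dist <= kappa |grad G| would give t <= C kappa t^2 for all
   small t > 0. *)

From Pilot Require Import Defs.
From HB Require Import structures.
From mathcomp Require Import all_boot all_order all_algebra all_fingroup.
From mathcomp Require Import all_classical all_reals all_analysis.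
From mathcomp Require Import ring lra zify.
Set Implicit Arguments. Unset Strict Implicit. Unset Printing Implicit Defensive.
Import Order.TTheory GRing.Theory Num.Theory.
Local Open Scope ring_scope.

Lemma ler_sum_term (R : numDomainType) (I : finType) (F : I -> R) i :
  (forall j, 0 <= F j) -> F i <= \sum_j F j.
Proof. by move=> F0; rewrite (bigD1 i) //= lerDl sumr_ge0. Qed.

Lemma ler_sum_term2 (R : numDomainType) (I J : finType) (F : I -> J -> R) i j :
  (forall i j, 0 <= F i j) -> F i j <= \sum_i \sum_j F i j.
Proof.
move=> F0; apply: le_trans (ler_sum_term _ (F0 i)) (ler_sum_term _ _) => a.
exact: sumr_ge0.
Qed.

Section FrobeniusInner.
Variable R : realType.

Definition mxdot m n (A B : 'M[R]_(m, n)) : R := \sum_i \sum_j A i j * B i j.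

Lemma mxdot_supp1 m n (A B : 'M[R]_(m, n)) (i : 'I_m) (j : 'I_n) :
  (forall a c, (a != i) || (c != j) -> A a c * B a c = 0) ->
  mxdot A B = A i j * B i j.
Proof.
move=> Hout; rewrite /mxdot (bigD1 i) //= (bigD1 j) //= !big1 ?addr0 //.
  by move=> a ai; apply: big1 => c _; apply: Hout; rewrite ai.
by move=> c cj; apply: Hout; rewrite cj orbT.
Qed.

Lemma mxdotDr m n (A B C : 'M[R]_(m, n)) :
  mxdot A (B + C) = mxdot A B + mxdot A C.
Proof.
rewrite /mxdot -big_split /=; apply: eq_bigr => i _.
by rewrite -big_split /=; apply: eq_bigr => j _; rewrite mxE mulrDr.
Qed.

Lemma mxdotZl m n c (A B : 'M[R]_(m, n)) : mxdot (c *: A) B = c * mxdot A B.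
Proof.
rewrite /mxdot mulr_sumr; apply: eq_bigr => i _; rewrite mulr_sumr.
by apply: eq_bigr => j _; rewrite mxE mulrA.
Qed.

Lemma frob2E m n (A : 'M[R]_(m, n)) : frob2 A = mxdot A A.
Proof. by apply: eq_bigr => i _; apply: eq_bigr => j _; rewrite expr2. Qed.

Lemma frob2D m n (A B : 'M[R]_(m, n)) :
  frob2 (A + B) = frob2 A + 2 * mxdot A B + frob2 B.
Proof.
rewrite /frob2 /mxdot mulr_sumr -!big_split /=; apply: eq_bigr => i _.
by rewrite mulr_sumr -!big_split /=; apply: eq_bigr => j _; rewrite mxE; ring.
Qed.

Lemma frob2_ge0 m n (A : 'M[R]_(m, n)) : 0 <= frob2 A.
Proof. by apply: sumr_ge0 => i _; apply: sumr_ge0 => j _; apply: sqr_ge0. Qed.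

Lemma sqr_entry_le_frob2 m n (A : 'M[R]_(m, n)) i j : A i j ^+ 2 <= frob2 A.
Proof. exact: ler_sum_term2 (fun a c => A a c ^+ 2) i j (fun _ _ => sqr_ge0 _). Qed.

Lemma frob2_trace m n (A : 'M[R]_(m, n)) : frob2 A = \tr (A *m A^T).
Proof.
apply: eq_bigr => i _; rewrite mxE.
by apply: eq_bigr => j _; rewrite mxE expr2.
Qed.

Lemma frob2_orthogonal_mul m n (U : 'M[R]_m) (V : 'M[R]_n) (S : 'M[R]_(m, n)) :
  Defs.orthogonal U -> Defs.orthogonal V -> frob2 (U *m S *m V^T) = frob2 S.
Proof.
move=> oU oV; have oVT : V^T *m V = 1%:M := mulmx1C oV.
have oUT : U^T *m U = 1%:M := mulmx1C oU.
rewrite !frob2_trace !trmx_mul !trmxK !mulmxA -[U *m S *m V^T *m V]mulmxA oVT mulmx1.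
by rewrite mxtrace_mulC !mulmxA oUT mul1mx.
Qed.

End FrobeniusInner.

Section EntrywiseBounds.
Variable R : realType.

Definition mxbounded m n (M : 'M[R]_(m, n)) (c : R) := forall i j, `|M i j| <= c.

Lemma mxbounded_exists m n (M : 'M[R]_(m, n)) : exists2 c, 0 <= c & mxbounded M c.
Proof.
exists (\sum_i \sum_j `|M i j|); first by do 2!apply: sumr_ge0 => ? _.
by move=> i j; apply: ler_sum_term2 (fun a c => `|M a c|) i j (fun _ _ => normr_ge0 _).
Qed.

Lemma mxbounded0 m n : mxbounded (0 : 'M[R]_(m, n)) 0.
Proof. by move=> i j; rewrite mxE normr0. Qed.

Lemma mxbounded_le m n (M : 'M[R]_(m, n)) c c' :
  c <= c' -> mxbounded M c -> mxbounded M c'.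
Proof. by move=> cc' Mc i j; apply: le_trans (Mc i j) cc'. Qed.

Lemma mxboundedD m n (A B : 'M[R]_(m, n)) ca cb :
  mxbounded A ca -> mxbounded B cb -> mxbounded (A + B) (ca + cb).
Proof. by move=> HA HB i j; rewrite mxE (le_trans (ler_normD _ _)) ?lerD. Qed.

Lemma mxboundedM m k n (A : 'M[R]_(m, k)) (B : 'M[R]_(k, n)) ca cb :
  0 <= ca -> 0 <= cb -> mxbounded A ca -> mxbounded B cb ->
  mxbounded (A *m B) (k%:R * ca * cb).
Proof.
move=> ca0 cb0 HA HB i j; rewrite mxE (le_trans (ler_norm_sum _ _ _)) //.
apply: le_trans (_ : \sum_(l < k) (ca * cb) <= _).
  by apply: ler_sum => l _; rewrite normrM ler_pM.
by rewrite sumr_const card_ord -mulrA mulr_natl.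
Qed.

Lemma mxdot_bounded m n (A B : 'M[R]_(m, n)) ca cb :
  0 <= ca -> 0 <= cb -> mxbounded A ca -> mxbounded B cb ->
  `|mxdot A B| <= m%:R * n%:R * ca * cb.
Proof.
move=> ca0 cb0 HA HB; rewrite (le_trans (ler_norm_sum _ _ _)) //.
apply: le_trans (_ : \sum_(i < m) (n%:R * ca * cb) <= _).
  apply: ler_sum => i _; rewrite (le_trans (ler_norm_sum _ _ _)) //.
  apply: le_trans (_ : \sum_(j < n) (ca * cb) <= _).
    by apply: ler_sum => j _; rewrite normrM ler_pM.
  by rewrite sumr_const card_ord -mulrA mulr_natl.
by rewrite sumr_const card_ord -!mulrA !mulr_natl.
Qed.

End EntrywiseBounds.

Section TupleCalculus.
Variables (R : realType) (d : nat -> nat) (L : nat).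
Implicit Types W H : wtuple R d.

Fixpoint dwprod W H n : 'M[R]_(d n, d 0) :=
  match n return 'M[R]_(d n, d 0) with
  | 0 => 0
  | k.+1 => W k *m dwprod W H k + H k *m wprod W k
  end.

Fixpoint wprod_rem W H n : 'M[R]_(d n, d 0) :=
  match n return 'M[R]_(d n, d 0) with
  | 0 => 0
  | k.+1 => W k *m wprod_rem W H k + H k *m (dwprod W H k + wprod_rem W H k)
  end.

Lemma wprodD W H n :
  wprod (wadd W H) n = wprod W n + dwprod W H n + wprod_rem W H n.
Proof.
elim: n => [|n IH] /=; first by rewrite !addr0.
rewrite IH /wadd !mulmxDl !mulmxDr -(addrA (H n *m _)) addrACA.
by rewrite -(addrA (W n *m wprod W n)).
Qed.

Lemma wnorm_ge0 H : 0 <= wnorm L H.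
Proof. exact: sqrtr_ge0. Qed.

Lemma wnorm_sqr H : wnorm L H ^+ 2 = \sum_(n < L) frob2 (H n).
Proof. by rewrite sqr_sqrtr // sumr_ge0 // => n _; apply: frob2_ge0. Qed.

Lemma entry_le_wnorm H n a b : (n < L)%N -> `|H n a b| <= wnorm L H.
Proof.
move=> nL; rewrite -ler_sqr ?nnegrE ?wnorm_ge0 // wnorm_sqr real_normK ?num_real //.
rewrite (le_trans (sqr_entry_le_frob2 _ a b)) // (bigD1 (Ordinal nL)) //= lerDl.
by rewrite sumr_ge0 // => k _; apply: frob2_ge0.
Qed.

Lemma mxbounded_wnorm H n : (n < L)%N -> mxbounded (H n) (wnorm L H).
Proof. by move=> nL a b; apply: entry_le_wnorm. Qed.

Lemma dwprod_bounded W n : (n <= L)%N ->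
  exists2 C, 0 <= C & forall H, mxbounded (dwprod W H n) (C * wnorm L H).
Proof.
elim: n => [_|n IH nL]; first by exists 0 => // H; rewrite mul0r; apply: mxbounded0.
have [CD CD0 HD] := IH (ltnW nL).
have [CW CW0 HW] := mxbounded_exists (W n).
have [CP CP0 HP] := mxbounded_exists (wprod W n).
exists ((d n)%:R * CW * CD + (d n)%:R * CP); first by rewrite addr_ge0 ?mulr_ge0.
move=> H; have h0 := wnorm_ge0 H.
apply: mxbounded_le (mxboundedD (mxboundedM CW0 (mulr_ge0 CD0 h0) HW (HD H))
                                 (mxboundedM h0 CP0 (mxbounded_wnorm H nL) HP)).
by lra.
Qed.

Lemma wprod_rem_bounded W n : (n <= L)%N ->
  exists2 C, 0 <= C &
    forall H, wnorm L H <= 1 -> mxbounded (wprod_rem W H n) (C * wnorm L H ^+ 2).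
Proof.
elim: n => [_|n IH nL]; first by exists 0 => // H _; rewrite mul0r; apply: mxbounded0.
have [CR CR0 HR] := IH (ltnW nL).
have [CD CD0 HD] := dwprod_bounded W (ltnW nL).
have [CW CW0 HW] := mxbounded_exists (W n).
exists ((d n)%:R * CW * CR + (d n)%:R * (CD + CR)); first by rewrite addr_ge0 ?mulr_ge0 ?addr_ge0.
move=> H h1; set h := wnorm L H; have h0 : 0 <= h := wnorm_ge0 H.
have hh : h ^+ 2 <= h by rewrite expr2 ler_piMl.
have HDR : mxbounded (dwprod W H n + wprod_rem W H n) ((CD + CR) * h).
  apply: mxbounded_le (mxboundedD (HD H) (HR H h1)).
  by rewrite mulrDl lerD2l ler_wpM2l.
apply: mxbounded_le (mxboundedD (mxboundedM CW0 (mulr_ge0 CR0 (sqr_ge0 h)) HW (HR H h1))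
                                 (mxboundedM h0 (mulr_ge0 (addr_ge0 CD0 CR0) h0)
                                    (mxbounded_wnorm H nL) HDR)).
by lra.
Qed.

Lemma is_gradient_sqr_remainder (f : wtuple R d -> R) W g :
  (exists K, forall H, wnorm L H <= 1 ->
     `|f (wadd W H) - f W - winner L g H| <= K * wnorm L H ^+ 2) ->
  is_gradient L f W g.
Proof.
move=> [K HK] e e0; set K' := `|K| + 1.
have K'0 : 0 < K' by rewrite ltr_wpDl.
exists (Num.min 1 (e / K')); first by rewrite lt_min ltr01 divr_gt0.
move=> H; rewrite lt_min => /andP[/ltW h1 /ltW he]; set h := wnorm L H.
have h0 : 0 <= h := wnorm_ge0 H.
apply: (le_trans (HK H h1)); rewrite expr2 mulrA ler_wpM2r //.
rewrite ler_pdivlMr // mulrC in he; apply: le_trans he.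
by rewrite ler_wpM2r // (le_trans (ler_norm K)) // lerDl.
Qed.

Section Objective.
Variables (lam : R) (y : nat -> R).
Hypothesis lam_ge0 : 0 <= lam.

Definition residual W := wprod W L - Num.sqrt lam *: Ymat d L y.

Definition dGobj W H :=
  2 * mxdot (residual W) (dwprod W H L) + 2 * lam * winner L W H.

Lemma GobjD W H :
  Gobj L lam y (wadd W H) - Gobj L lam y W - dGobj W H =
  2 * mxdot (residual W) (wprod_rem W H L)
    + frob2 (dwprod W H L + wprod_rem W H L) + lam * wnorm L H ^+ 2.
Proof.
rewrite /Gobj /dGobj -/(residual W).
have -> : wprod (wadd W H) L - Num.sqrt lam *: Ymat d L y
    = residual W + (dwprod W H L + wprod_rem W H L).
  by rewrite wprodD /residual addrAC (addrAC (wprod W L)) -addrA.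
have -> : \sum_(n < L) frob2 (wadd W H n) =
    \sum_(n < L) frob2 (W n) + 2 * winner L W H + wnorm L H ^+ 2.
  rewrite wnorm_sqr /winner mulr_sumr -!big_split /=.
  by apply: eq_bigr => n _; rewrite frob2D.
by rewrite frob2D mxdotDr; ring.
Qed.

Lemma Gobj_sqr_remainder W : exists K, forall H, wnorm L H <= 1 ->
  `|Gobj L lam y (wadd W H) - Gobj L lam y W - dGobj W H| <= K * wnorm L H ^+ 2.
Proof.
have [CX CX0 HX] := mxbounded_exists (residual W).
have [CD CD0 HD] := dwprod_bounded W (leqnn L).
have [CR CR0 HR] := wprod_rem_bounded W (leqnn L).
set mn : R := (d L)%:R * (d 0)%:R; have mn0 : 0 <= mn by rewrite mulr_ge0.
exists (2 * (mn * CX * CR) + mn * (CD + CR) ^+ 2 + lam) => H h1.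
set h := wnorm L H; have h0 : 0 <= h := wnorm_ge0 H.
have hh : h ^+ 2 <= h by rewrite expr2 ler_piMl.
have HDR : mxbounded (dwprod W H L + wprod_rem W H L) ((CD + CR) * h).
  apply: mxbounded_le (mxboundedD (HD H) (HR H h1)).
  by rewrite mulrDl lerD2l ler_wpM2l.
have b1 := mxdot_bounded CX0 (mulr_ge0 CR0 (sqr_ge0 h)) HX (HR H h1).
have b2 := mxdot_bounded (mulr_ge0 (addr_ge0 CD0 CR0) h0)
                         (mulr_ge0 (addr_ge0 CD0 CR0) h0) HDR HDR.
rewrite -/mn in b1 b2; rewrite -frob2E (ger0_norm (frob2_ge0 _)) in b2.
rewrite GobjD (le_trans (ler_normD _ _)) // (le_trans (lerD (ler_normD _ _) (lexx _))) //.
rewrite normrM (ger0_norm (ler0n _ 2)) (ger0_norm (frob2_ge0 _)).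
rewrite (ger0_norm (mulr_ge0 lam_ge0 (sqr_ge0 h))).
lra.
Qed.

Lemma is_gradient_Gobj W g :
  (forall H, dGobj W H = winner L g H) -> is_gradient L (Gobj L lam y) W g.
Proof.
move=> dGg; apply: is_gradient_sqr_remainder.
have [K HK] := Gobj_sqr_remainder W; exists K => H; rewrite -dGg; exact: HK.
Qed.

End Objective.
End TupleCalculus.

Section SingleEntry.
Variable R : realType.

Definition single_mx {m n} (i j : nat) (b : R) : 'M[R]_(m, n) :=
  \matrix_(a, c) if (a == i :> nat) && (c == j :> nat) then b else 0.

Lemma single_mxZ m n i j b : single_mx i j b = b *: (single_mx i j 1 : 'M[R]_(m, n)).
Proof. by apply/matrixP => a c; rewrite !mxE; case: ifP; rewrite ?mulr1 ?mulr0. Qed.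

Lemma single_mxB m n i j a b :
  single_mx i j b - single_mx i j a = (single_mx i j (b - a) : 'M[R]_(m, n)).
Proof. by apply/matrixP => r c; rewrite !mxE; case: ifP; rewrite ?subrr. Qed.

Lemma tr_single_mx m n i j b : (single_mx i j b : 'M[R]_(m, n))^T = single_mx j i b.
Proof. by apply/matrixP => a c; rewrite !mxE andbC. Qed.

Lemma mxdot_single1 m n (i : 'I_m) (j : 'I_n) M : mxdot (single_mx i j 1) M = M i j.
Proof.
rewrite (mxdot_supp1 (i := i) (j := j)) ?mxE ?eqxx ?mul1r // => a c ac.
by rewrite mxE !(inj_eq val_inj); case/orP: ac => /negbTE ->; rewrite ?andbF mul0r.
Qed.

Lemma frob2_single_mx m n i j b : (i < m)%N -> (j < n)%N ->
  frob2 (single_mx i j b : 'M[R]_(m, n)) = b ^+ 2.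
Proof.
move=> im jn; rewrite frob2E (mxdot_supp1 (i := Ordinal im) (j := Ordinal jn)) ?mxE ?eqxx ?expr2 //.
by move=> a c /orP[] /negbTE; rewrite -val_eqE /= => ne; rewrite mxE ne ?andbF mul0r.
Qed.

Lemma sum_ord_nat1 k j (hj : (j < k)%N) (F : 'I_k -> R) :
  \sum_(r < k) (if r == j :> nat then F r else 0) = F (Ordinal hj).
Proof.
rewrite (bigD1 (Ordinal hj)) //= eqxx big1 ?addr0 // => r /negbTE rj.
by rewrite -val_eqE /= in rj; rewrite rj.
Qed.

Lemma mulmx_single_mx_l {m k n i j} (hj : (j < k)%N) b (M : 'M[R]_(k, n)) a c :
  (single_mx i j b *m M : 'M[R]_(m, n)) a c
    = if a == i :> nat then b * M (Ordinal hj) c else 0.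
Proof.
rewrite mxE; have [ai|ai] := eqVneq (a : nat) i; last first.
  by apply: big1 => r _; rewrite mxE (negbTE ai) mul0r.
rewrite -(sum_ord_nat1 hj (fun r => b * M r c)); apply: eq_bigr => r _.
by rewrite mxE ai eqxx /=; case: (r == j :> nat); rewrite ?mul0r.
Qed.

Lemma mulmx_single_mx_r {m k n j l} (hj : (j < k)%N) b (M : 'M[R]_(m, k)) a c :
  (M *m single_mx j l b : 'M[R]_(m, n)) a c
    = if c == l :> nat then M a (Ordinal hj) * b else 0.
Proof.
rewrite mxE; have [cl|cl] := eqVneq (c : nat) l; last first.
  by apply: big1 => r _; rewrite mxE (negbTE cl) andbF mulr0.
rewrite -(sum_ord_nat1 hj (fun r => M a r * b)); apply: eq_bigr => r _.
by rewrite mxE cl eqxx andbT; case: (r == j :> nat); rewrite ?mulr0.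
Qed.

Lemma single_mx_mul {m k n i j l} (hj : (j < k)%N) b c :
  (single_mx i j b : 'M[R]_(m, k)) *m single_mx j l c = (single_mx i l (b * c) : 'M[R]_(m, n)).
Proof.
apply/matrixP => a r; rewrite (mulmx_single_mx_l hj) !mxE eqxx /=.
by case: (a == i :> nat); case: (r == l :> nat); rewrite ?mulr0.
Qed.

End SingleEntry.

Section CriticalPolynomial.
Variable R : realType.

Lemma double_root_sqr_bound (P : {poly R}) (a : R) :
  root P a -> root P^`() a ->
  exists B, forall t, `|t| <= 1 -> `|P.[a + t]| <= B * t ^+ 2.
Proof.
case/factor_theorem => Q ->; rewrite derivM derivXsubC mulr1 => /rootP.
rewrite !hornerE subrr mulr0 add0r => /rootP /factor_theorem [Q2 ->].
exists (\sum_(i < size Q2) `|Q2`_i| * (`|a| + 1) ^+ i) => t t1.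
rewrite !hornerM !hornerXsubC addrAC subrr add0r -mulrA -expr2 normrM normrX.
rewrite real_normK ?num_real // ler_wpM2r ?sqr_ge0 // horner_coef.
rewrite (le_trans (ler_norm_sum _ _ _)) //.
apply: ler_sum => i _; rewrite normrM normrX ler_wpM2l // lerXn2r ?nnegrE //.
  by rewrite (le_trans (ler_normD _ _)) ?lerD2l.
Qed.

Definition crit_poly (L : nat) (lam yi : R) : {poly R} :=
  'X^(2 * L - 1) - (Num.sqrt lam * yi) *: 'X^(L - 1) + lam *: 'X.

Lemma horner_crit_poly L lam yi b : (crit_poly L lam yi).[b] =
  b ^+ (2 * L - 1) - Num.sqrt lam * yi * b ^+ (L - 1) + lam * b.
Proof. by rewrite !hornerE. Qed.

Lemma horner_deriv_crit_poly L lam yi b : (crit_poly L lam yi)^`().[b] =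
  (2 * L - 1)%:R * b ^+ (2 * L - 2) - Num.sqrt lam * yi * ((L - 1)%:R * b ^+ (L - 2))
    + lam.
Proof.
rewrite /crit_poly derivD derivB !derivZ derivXn derivXn derivX hornerD hornerD hornerN.
by rewrite !hornerZ !hornerMn !hornerXn hornerC -!subn1 -!subnDA mulr1 !mulr_natl.
Qed.

Lemma crit_poly_double_root_param L lam yi (s g : R) : (2 <= L)%N -> 0 < s -> 0 < g ->
  g ^+ (2 * (L - 1)) = (L - 2)%:R / L%:R ->
  lam = s ^+ (2 * (L - 1)) -> yi = s * (g ^+ L + (g ^+ (L - 2))^-1) ->
  root (crit_poly L lam yi) (s * g) /\ root (crit_poly L lam yi)^`() (s * g).
Proof.
case: L => [|[|m]] // _ s0 g0; rewrite !rootE horner_crit_poly horner_deriv_crit_poly.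
have -> : (2 * m.+2 - 1 = m + m + 3)%N by lia.
have -> : (2 * m.+2 - 2 = m + m + 2)%N by lia.
have -> : (2 * (m.+2 - 1) = (m + 1) * 2)%N by lia.
have -> : (m.+2 - 1 = m + 1)%N by lia.
have -> : (m.+2 - 2 = m)%N by lia.
have -> : g ^+ m.+2 = g ^+ m * g ^+ 2 by rewrite -exprD addn2.
rewrite !exprM => gc -> ->.
rewrite sqrtr_sqr ger0_norm ?exprn_ge0 ?ltW // !exprMn !exprD in gc *.
set u := s ^+ m; set v := g ^+ m.
have v0 : v != 0 by rewrite expf_neq0 ?gt_eqF.
have m2 : m.+2%:R != 0 :> R by rewrite pnatr_eq0.
split; apply/eqP; first by field.
have -> : (m + m + 3)%:R * (u * u * s ^+ 2 * (v * v * g ^+ 2)) -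
    u * s ^+ 1 * (s * (v * g ^+ 2 + v^-1)) * ((m + 1)%:R * (u * v)) + (u * s ^+ 1) ^+ 2
  = (u * s) ^+ 2 * (m.+2%:R * (v * g ^+ 1) ^+ 2 - m%:R).
  by rewrite -[m.+2]addn2 !natrD; field.
by rewrite gc; field.
Qed.

Lemma powRV (x r : R) : 0 <= x -> x^-1 `^ r = (x `^ r)^-1.
Proof. by move=> x0; rewrite -powR_inv1 // -powRrM mulN1r powRN. Qed.

Lemma crit_poly_double_root L lam yi : (3 <= L)%N -> 0 < yi -> lam = lam_crit L yi ->
  exists2 a, 0 < a & root (crit_poly L lam yi) a /\ root (crit_poly L lam yi)^`() a.
Proof.
move=> L3 yi0 lamE.
set c : R := (L - 2)%:R / L%:R; set N : R := (2 * (L - 1))%:R.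
have c0 : 0 < c by rewrite divr_gt0 ?ltr0n //; lia.
have N0 : N != 0 by rewrite pnatr_eq0; lia.
set g := c `^ N^-1; have g0 : 0 < g by rewrite powR_gt0.
have powR_g k : c `^ (k%:R / N) = g ^+ k by rewrite mulrC powRrM powR_mulrn ?powR_ge0.
have gN : g ^+ (2 * (L - 1)) = c by rewrite -powR_g divff // powRr1 ?ltW.
set K := g ^+ L + (g ^+ (L - 2))^-1.
have K0 : 0 < K by rewrite addr_gt0 ?invr_gt0 ?exprn_gt0.
have {}lamE : lam = (yi / K) ^+ (2 * (L - 1)).
  rewrite lamE /lam_crit -/N -(invf_div (L - 2)%:R) -/c powRV ?ltW // !powR_g.
  by rewrite exprMn exprVn.
have yiE : yi = yi / K * K by rewrite divfK ?gt_eqF.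
exists (yi / K * g); first by rewrite mulr_gt0 ?divr_gt0.
apply: crit_poly_double_root_param lamE yiE => //; first lia.
by rewrite divr_gt0.
Qed.
End CriticalPolynomial.

Section Spike.
Variables (R : realType) (d : nat -> nat) (L i0 : nat).

Definition spike_idx n := if (n == 0) || (n == L) then i0 else 0%N.

Definition spike (b : R) : wtuple R d :=
  fun n => single_mx (spike_idx n.+1) (spike_idx n) b.

Definition spike_dot (H : wtuple R d) n := \sum_(k < n) mxdot (spike 1 k) (H k).

Hypothesis spike_idx_lt : forall n, (n <= L)%N -> (spike_idx n < d n)%N.

Lemma spike_idxL : spike_idx L = i0.
Proof. by rewrite /spike_idx eqxx orbT. Qed.

Lemma wprod_spike b k : (0 < k <= L)%N ->
  wprod (spike b) k = single_mx (spike_idx k) i0 (b ^+ k).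
Proof.
elim: k => [|[|k] IH] // /andP[_ kL]; first by rewrite /= mulmx1 expr1.
change (spike b k.+1 *m wprod (spike b) k.+1 = single_mx (spike_idx k.+2) i0 (b ^+ k.+2)).
by rewrite IH ?(ltnW kL) // (single_mx_mul (spike_idx_lt (ltnW kL))) -exprS.
Qed.

Lemma winner_spike b H : winner L (spike b) H = b * spike_dot H L.
Proof.
rewrite mulr_sumr; apply: eq_bigr => n _.
change (mxdot (spike b n) (H n) = b * mxdot (spike 1 n) (H n)).
by rewrite /spike single_mxZ mxdotZl.
Qed.

Lemma dwprod_spike b H k (a : 'I_(d k)) (c : 'I_(d 0)) : (0 < k <= L)%N ->
  a = spike_idx k :> nat -> c = i0 :> nat ->
  dwprod (spike b) H k a c = b ^+ k.-1 * spike_dot H k.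
Proof.
elim: k a => [|[|k] IH] a // /andP[_ kL] ak ci0.
  rewrite /= mulmx0 add0r mulmx1 /spike_dot big_ord1 mul1r /spike -ak.
  by rewrite (_ : spike_idx 0 = i0) // -ci0 mxdot_single1.
have kL' := spike_idx_lt (ltnW kL).
change ((spike b k.+1 *m dwprod (spike b) H k.+1 + H k.+1 *m wprod (spike b) k.+1) a c
  = b ^+ k.+1 * spike_dot H k.+2).
rewrite mxE wprod_spike ?(ltnW kL) // (mulmx_single_mx_l kL') (mulmx_single_mx_r kL').
rewrite -ak ci0 !eqxx IH ?(ltnW kL) // [spike_dot H k.+2]big_ord_recr /=.
have -> : mxdot (spike 1 k.+1) (H k.+1) = H k.+1 a (Ordinal kL').
  by rewrite /spike -ak -[spike_idx k.+1]/(nat_of_ord (Ordinal kL')) mxdot_single1.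
by rewrite -/(spike_dot H k.+1) exprS; ring.
Qed.

Lemma dwprod_spike_eq0 b H k (a : 'I_(d k)) (c : 'I_(d 0)) : (1 < k <= L)%N ->
  (a : nat) != spike_idx k -> (c : nat) != i0 -> dwprod (spike b) H k a c = 0.
Proof.
case: k a => [|l] a // /andP[l0 lL] ak ci0.
have lL' := spike_idx_lt (ltnW lL).
have lL0 : (0 < l <= L)%N by rewrite (ltnW lL) andbT.
change ((spike b l *m dwprod (spike b) H l + H l *m wprod (spike b) l) a c = 0).
rewrite mxE wprod_spike // (mulmx_single_mx_l lL') (mulmx_single_mx_r lL').
by rewrite (negbTE ak) (negbTE ci0) addr0.
Qed.

Lemma dGobj_spike lam y b H : (1 < L)%N ->
  dGobj L lam y (spike b) H = winner L (spike (2 * (crit_poly L lam (y i0)).[b])) H.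
Proof.
move=> L1; have L0 : (0 < L)%N by apply: ltnW.
have iL : (i0 < d L)%N by rewrite -{1}spike_idxL spike_idx_lt.
have i00 : (i0 < d 0)%N := spike_idx_lt (leq0n L).
have residualE (a : 'I_(d L)) (c : 'I_(d 0)) : residual L lam y (spike b) a c =
    (if (a == i0 :> nat) && (c == i0 :> nat) then b ^+ L else 0)
    - Num.sqrt lam * (if a == c :> nat then y a else 0).
  by rewrite /residual wprod_spike ?L0 ?leqnn // spike_idxL !mxE.
rewrite /dGobj !winner_spike (mxdot_supp1 (i := Ordinal iL) (j := Ordinal i00)); last first.
  move=> a c /orP ac; rewrite residualE.
  have [ac'|nac] := eqVneq (a : nat) c; last first.
    have /negbTE -> : ~~ ((a == i0 :> nat) && (c == i0 :> nat)).
      by apply: contra nac => /andP[/eqP -> /eqP ->].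
    by rewrite mulr0 subrr mul0r.
  have ai : (a : nat) != i0 by case: ac; rewrite -val_eqE //= -ac'.
  by rewrite dwprod_spike_eq0 ?mulr0 ?L1 ?leqnn ?spike_idxL // -ac'.
rewrite residualE /= !eqxx dwprod_spike ?L0 ?leqnn ?spike_idxL // horner_crit_poly /=.
have -> : (2 * L - 1 = L + L.-1)%N by lia.
by rewrite exprD subn1; ring.
Qed.

Lemma is_gradient_Gobj_spike lam y b : 0 <= lam -> (1 < L)%N ->
  is_gradient L (Gobj L lam y) (spike b) (spike (2 * (crit_poly L lam (y i0)).[b])).
Proof. by move=> lam0 L1; apply: (is_gradient_Gobj lam0) => H; apply: dGobj_spike. Qed.

Lemma wnorm_spike b : wnorm L (spike b) = Num.sqrt L%:R * `|b|.
Proof.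
rewrite /wnorm -sqrtr_sqr -sqrtrM ?ler0n //; congr Num.sqrt.
rewrite (eq_bigr (fun=> b ^+ 2)) ?sumr_const ?card_ord ?mulr_natl // => n _.
by rewrite frob2_single_mx ?spike_idx_lt // ltnW.
Qed.

Lemma wnorm_sub_spike a b : wnorm L (wsub (spike b) (spike a)) = Num.sqrt L%:R * `|b - a|.
Proof.
rewrite -wnorm_spike; congr Num.sqrt; apply: eq_bigr => n _.
by rewrite /wsub /spike single_mxB.
Qed.

End Spike.

Section CriticalSet.
Variables (R : realType) (d : nat -> nat) (L : nat).

Definition scaled_basis (i0 : nat) (a : R) : nat -> R := fun k => if k == i0 then a else 0.

Lemma sortdesc_scaled_basis i0 a : (i0 < dmin d L)%N -> 0 <= a ->
  sortdesc d L (scaled_basis i0 a) =1 scaled_basis 0 a.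
Proof.
move=> i0n a0; set n := dmin d L.
have ge_trans : transitive (fun x z : R => z <= x) by move=> u v w uv vw; apply: le_trans vw uv.
have sorted_basis : sorted (fun x z : R => z <= x) (a :: nseq n.-1 0).
  by elim: n.-1 a a0 => //= m IH x x0; rewrite x0 IH.
move=> j; rewrite /sortdesc -/n.
have -> : path.sort (fun x z : R => z <= x) [seq scaled_basis i0 a k | k <- iota 0 n]
    = a :: nseq n.-1 0.
  apply: (sorted_eq ge_trans) => //.
  - by move=> u v /andP[uv vu]; apply/eqP; rewrite eq_le uv vu.
  - by apply: sort_sorted => u v; exact: le_total.
  rewrite perm_sort (_ : n = i0 + (n - i0.+1).+1)%N; last by lia.
  rewrite iotaD map_cat /= /scaled_basis eqxx perm_catC /= perm_cons.
  have zero_off (s : seq nat) : i0 \notin s ->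
      [seq (if k == i0 then a else 0) | k <- s] = nseq (size s) 0.
    by elim: s => //= k s IH; rewrite inE negb_or eq_sym => /andP[/negbTE -> /IH ->].
  rewrite !zero_off ?mem_iota ?ltnn // !size_iota -nseqD.
  by have -> : (n - (0 + i0.+1) + i0 = (i0 + (n - (0 + i0.+1)).+1).-1)%N by lia.
by case: j => [|j] //=; rewrite nth_nseq if_same.
Qed.

Lemma Sig_sortdesc_scaled_basis i0 a m n : (i0 < dmin d L)%N -> 0 <= a ->
  Sig d L (sortdesc d L (scaled_basis i0 a)) m n = single_mx 0 0 a.
Proof.
move=> i0n a0; apply/matrixP => p q; rewrite !mxE sortdesc_scaled_basis //.
have [->|] := eqVneq (p : nat) 0%N; last by rewrite /scaled_basis => /negbTE ->; rewrite !if_same.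
by rewrite eq_sym (leq_ltn_trans (leq0n _) i0n) andbT.
Qed.

Lemma plift_tperm i0 (h0 : (0 < dmin d L)%N) (hi : (i0 < dmin d L)%N) j :
  (j < dmin d L)%N ->
  plift (tperm (Ordinal h0) (Ordinal hi)) j = if j == 0%N then i0 else if j == i0 then 0%N else j.
Proof.
move=> jn; rewrite /plift insubT /=.
case: tpermP => [/(congr1 val)/= ->|/(congr1 val)/= ->|j0 ji] //.
  by rewrite eqxx; case: eqP => [->|].
have /negbTE -> : j != 0%N by apply/eqP => e; apply: j0; apply: val_inj.
by have /negbTE -> : j != i0 by apply/eqP => e; apply: ji; apply: val_inj.
Qed.

Lemma mulmx_single_Pblk m n i j (s : 'S_(dmin d L)) b : (j < n)%N ->
  (single_mx i j b : 'M[R]_(m, n)) *m Pblk R s = single_mx i (plift s j) b.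
Proof.
move=> jn; apply/matrixP => p q; rewrite (mulmx_single_mx_l jn) !mxE /=.
rewrite (eq_sym (plift s j)).
by case: (p == i :> nat); case: (q == plift s j :> nat); rewrite ?mulr1 ?mulr0.
Qed.

Lemma trPblk_mul_single m n i j (s : 'S_(dmin d L)) b : (i < m)%N ->
  (Pblk R s)^T *m (single_mx i j b : 'M[R]_(m, n)) = single_mx (plift s i) j b.
Proof.
by move=> im; rewrite -[LHS]trmxK trmx_mul trmxK tr_single_mx mulmx_single_Pblk // tr_single_mx.
Qed.

Lemma spike_in_What lam y i0 a : (forall n, (n <= L)%N -> (0 < d n)%N) ->
  (i0 < dmin d L)%N -> 0 <= a -> inA d L lam y (scaled_basis i0 a) ->
  What L lam y (scaled_basis i0 a) (spike d L i0 a).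
Proof.
move=> d_gt0 i0n a0 Aa.
have h0 : (0 < dmin d L)%N := leq_ltn_trans (leq0n _) i0n.
(* The transposition (0 i0) moves the nonzero singular value, sorted first, to slot i0. *)
pose s := tperm (Ordinal h0) (Ordinal i0n).
have s0 : plift s 0 = i0 by rewrite plift_tperm.
exists (scaled_basis i0 a), s; split => //; split.
  move=> j jn; rewrite sortdesc_scaled_basis // plift_tperm // /scaled_basis.
  have [_|j0] := eqVneq j 0%N; first by rewrite eqxx.
  have [ji|ji] := eqVneq j i0; last by rewrite (negbTE ji).
  by rewrite eq_sym -ji (negbTE j0).
have orth1 k : Defs.orthogonal (1%:M : 'M[R]_k) by rewrite /Defs.orthogonal trmx1 mulmx1.
have diag1 k : blockdiag d L y (1%:M : 'M[R]_k).
  by move=> p q; rewrite mxE; have [->|] := eqVneq p q; rewrite ?eqxx.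
exists 1%:M, 1%:M; do 4!(split => //); split.
  by move=> p q p' q' pp qq _ _; rewrite !mxE -!val_eqE /= pp qq eq_sym.
pose U n : 'M[R]_(d n) := if (n == 0) || (n == L) then (Pblk R s)^T else 1%:M.
have conj (b1 b0 : bool) p q : (0 < p)%N -> (0 < q)%N ->
    (if b1 then (Pblk R s)^T else 1%:M) *m (single_mx 0 0 a : 'M[R]_(p, q))
      *m (if b0 then (Pblk R s)^T else 1%:M)^T
    = single_mx (if b1 then i0 else 0%N) (if b0 then i0 else 0%N) a.
  move=> p0 q0; case: b1; case: b0;
  by rewrite ?trmxK ?trmx1 ?mul1mx ?mulmx1 ?trPblk_mul_single ?mulmx_single_Pblk ?s0.
exists U; split; first by rewrite /U mulmx1.
split; first by rewrite /U eqxx orbT mul1mx.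
split; first by move=> n /andP[n0 nL]; rewrite /U gtn_eqF // ltn_eqF.
move=> n nL; rewrite Sig_sortdesc_scaled_basis // conj ?d_gt0 //; exact: ltnW.
Qed.

Lemma frob2_What_inner lam y sstar (V : wtuple R d) n :
  What L lam y sstar V -> (0 < n)%N -> (n.+1 < L)%N ->
  frob2 (V n) = frob2 (Sig d L (sortdesc d L sstar) (d n.+1) (d n)).
Proof.
move=> [a [s [_ [_ WV]]]] n0 nL; case: WV => O0 [OL [_ [_ [_ [_ [_ [U [_ [_ [orthU WU]]]]]]]]]].
rewrite WU; last exact: ltnW.
by rewrite frob2_orthogonal_mul //; apply: orthU; rewrite ?n0 // ltnW.
Qed.

Lemma sub_spike_What_ge lam y i0 a t (V : wtuple R d) : (2 < L)%N ->
  (forall n, (n <= L)%N -> (0 < d n)%N) -> (i0 < dmin d L)%N -> 0 <= a -> 0 <= t ->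
  What L lam y (scaled_basis i0 a) V -> t <= wnorm L (wsub (spike d L i0 (a + t)) V).
Proof.
move=> L2 d_gt0 i0n a0 t0 WV.
have d1 : (0 < d 1)%N by apply: d_gt0; lia.
have d2 : (0 < d 2)%N by apply: d_gt0; lia.
(* Layer 1 of V is an orthogonal conjugate of diag(a, 0, ...), so its entries are at most a. *)
have V1 : `|V 1%N (Ordinal d2) (Ordinal d1)| <= a.
  rewrite -ler_sqr ?nnegrE // real_normK ?num_real // (le_trans (sqr_entry_le_frob2 _ _ _)) //.
  by rewrite (frob2_What_inner WV) // Sig_sortdesc_scaled_basis // frob2_single_mx.
apply: le_trans (entry_le_wnorm _ (Ordinal d2) (Ordinal d1) (ltnW L2)).
rewrite !mxE /spike_idx /= (ltn_eqF L2) (ltn_eqF (ltnW L2)) /=.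
by rewrite (le_trans _ (ler_norm _)) // -subr_ge0; move: V1; rewrite ler_norml; lra.
Qed.

End CriticalSet.

Section Distance.
Variables (R : realType) (d : nat -> nat) (L : nat).
Implicit Types (W V : wtuple R d) (S : set (wtuple R d)).

Lemma wdist_le W V S : S V -> wdist L W S <= wnorm L (wsub W V).
Proof.
move=> SV; apply: ge_inf; last by exists V.
by exists 0 => _ [V' _ <-]; apply: wnorm_ge0.
Qed.

Lemma wdist_ge W V0 S t : S V0 -> (forall V, S V -> t <= wnorm L (wsub W V)) ->
  t <= wdist L W S.
Proof.
move=> SV0 tle; apply: lb_le_inf => [|_ [V SV <-]]; last exact: tle.
by exists (wnorm L (wsub W V0)), V0.
Qed.

End Distance.

Lemma rY_le_dmin (R : realType) d L (y : nat -> R) : (rY d L y <= dmin d L)%N.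
Proof. by rewrite (leq_trans (count_size _ _)) ?size_iota. Qed.

Lemma lam_crit0 (R : realType) L : (1 < L)%N -> lam_crit L (0 : R) = 0.
Proof.
by move=> L1; rewrite /lam_crit expr0n muln_eq0 (_ : (L - 1 == 0)%N = false) ?mul0r //; lia.
Qed.

Lemma spike_idx_lt_dim d L i0 : (forall n, (n <= L)%N -> (0 < d n)%N) ->
  (i0 < dmin d L)%N -> forall n, (n <= L)%N -> (spike_idx L i0 n < d n)%N.
Proof.
move=> d_gt0 i0n n nL; rewrite /spike_idx; case: ifP => [/orP[]/eqP->|_]; last exact: d_gt0.
  by rewrite (leq_trans i0n) ?geq_minl.
by rewrite (leq_trans i0n) ?geq_minr.
Qed.

Lemma sqr_not_linearly_bounded (R : realFieldType) (r C : R) (f u : R -> R) :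
  (forall t, 0 < t <= 1 -> [/\ t <= f t, f t <= r * t & u t <= C * t ^+ 2]) ->
  forall eps kappa, 0 < eps -> 0 < kappa ->
  exists t, [/\ 0 < t <= 1, f t <= eps & kappa * u t < f t].
Proof.
move=> fu eps kappa eps0 kappa0; set r' := `|r| + 1; set C' := `|C| + 1.
have r'0 : 0 < r' by rewrite ltr_wpDl.
have C'0 : 0 < C' by rewrite ltr_wpDl.
have rr' : r <= r' by rewrite (le_trans (ler_norm r)) // lerDl.
have CC' : C <= C' by rewrite (le_trans (ler_norm C)) // lerDl.
set t := Num.min 1 (Num.min (eps / r') (1 / (2 * kappa * C'))).
have t0 : 0 < t by rewrite !lt_min ltr01 !divr_gt0 ?mulr_gt0.
have t1 : t <= 1 by rewrite ge_min lexx.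
have teps : r' * t <= eps by rewrite mulrC -ler_pdivlMr // !ge_min lexx orbT.
have tkC : 2 * kappa * C' * t <= 1.
  by rewrite mulrC -ler_pdivlMr ?mulr_gt0 // !ge_min lexx !orbT.
have t01 : 0 < t <= 1 by rewrite t0.
have [ft ftr ut] := fu t t01.
exists t; split => //.
  by rewrite (le_trans ftr) // (le_trans _ teps) // ler_wpM2r // ltW.
have : u t <= C' * t ^+ 2 by rewrite (le_trans ut) // ler_wpM2r ?sqr_ge0.
nra.
Qed.

Lemma inA_scaled_basis (R : realType) d L lam (y : nat -> R) i0 a : (1 < L)%N -> 0 <= a ->
  root (crit_poly L lam (y i0)) a -> inA d L lam y (scaled_basis i0 a).
Proof.
move=> L1 a0 Pa i _; rewrite /scaled_basis; case: eqP => [->|_].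
  by rewrite -horner_crit_poly (rootP Pa).
have [L21 L10] : (2 * L - 1 == 0)%N = false /\ (L - 1 == 0)%N = false by split; lia.
by rewrite !expr0n L21 L10 !mulr0 subrr addr0.
Qed.

Section SpikeCurve.
Variables (R : realType) (d : nat -> nat) (L : nat) (lam : R) (y : nat -> R) (i0 : nat) (a : R).
Hypotheses (L3 : (2 < L)%N) (d_gt0 : forall n, (n <= L)%N -> (0 < d n)%N).
Hypotheses (i0n : (i0 < dmin d L)%N) (a0 : 0 <= a).
Hypotheses (Pa : root (crit_poly L lam (y i0)) a) (P'a : root (crit_poly L lam (y i0))^`() a).

Lemma spike_curve_estimates : exists C, forall t, 0 < t <= 1 ->
  let S := What L lam y (scaled_basis i0 a) in
  [/\ t <= wdist L (spike d L i0 (a + t)) S,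
      wdist L (spike d L i0 (a + t)) S <= Num.sqrt L%:R * t
    & wnorm L (spike d L i0 (2 * (crit_poly L lam (y i0)).[a + t])) <= C * t ^+ 2].
Proof.
have sidx := spike_idx_lt_dim d_gt0 i0n.
have Sa := spike_in_What d_gt0 i0n a0 (inA_scaled_basis (d := d) (ltnW L3) a0 Pa).
have [B PB] := double_root_sqr_bound Pa P'a.
exists (Num.sqrt L%:R * (2 * B)) => t /andP[t0 t1]; split.
- apply: (wdist_ge Sa) => V; exact: sub_spike_What_ge L3 d_gt0 i0n a0 (ltW t0).
- by rewrite (le_trans (wdist_le _ _ Sa)) // wnorm_sub_spike // addrAC subrr add0r gtr0_norm.
- rewrite wnorm_spike // -mulrA ler_wpM2l ?sqrtr_ge0 // normrM ger0_norm // -mulrA ler_wpM2l //.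
  by apply: PB; rewrite ger0_norm ?(ltW t0).
Qed.

End SpikeCurve.

Theorem lemmaA3 (R : realType) (L : nat) (d : nat -> nat) (lam : R) (y : nat -> R) :
  (3 <= L)%N ->
  (forall n, (n <= L)%N -> (0 < d n)%N) ->
  (forall n, (1 <= n <= L - 1)%N -> (dmin d L <= d n)%N) ->
  0 < lam ->
  (forall i, (i < dmin d L)%N -> 0 <= y i) ->
  (forall i j, (i <= j)%N -> (j < dmin d L)%N -> y j <= y i) ->
  (exists2 i, (i < rY d L y)%N & lam = lam_crit L (y i)) ->
  exists sstar : nat -> R, inA d L lam y sstar /\
    ~ (exists eps kappa : R, 0 < eps /\ 0 < kappa /\
        forall W : wtuple R d,
          wdist L W (What L lam y sstar) <= eps ->
          forall g : wtuple R d, is_gradient L (Gobj L lam y) W g ->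
            wdist L W (What L lam y sstar) <= kappa * wnorm L g).
Proof.
move=> L3 d_gt0 _ lam0 y_ge0 _ [i0 i0r lamE].
have i0n : (i0 < dmin d L)%N := leq_trans i0r (rY_le_dmin d L y).
have yi0 : 0 < y i0.
  rewrite lt0r y_ge0 // andbT; apply: contraTneq lam0 => y0.
  by rewrite lamE y0 lam_crit0 ?ltxx // ltnW.
have [a a0 [Pa P'a]] := crit_poly_double_root L3 yi0 lamE.
exists (scaled_basis i0 a); split; first exact: inA_scaled_basis (ltnW L3) (ltW a0) Pa.
move=> [eps [kappa [eps0 [kappa0 bound]]]].
have [C est] := spike_curve_estimates L3 d_gt0 i0n (ltW a0) Pa P'a.
have [t [_ teps]] := sqr_not_linearly_bounded
  (f := fun t => wdist L (spike d L i0 (a + t)) (What L lam y (scaled_basis i0 a))) est eps0 kappa0.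
apply/negP; rewrite -leNgt; apply: bound => //.
by apply: is_gradient_Gobj_spike; [exact: spike_idx_lt_dim | exact: ltW | exact: ltnW].
Qed.
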